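(* Let $k>0$ and consider the case $\Lambda=1$. The minimum of $(\Delta\bm{x})^2$ over all unit vectors of the $3$-dimensional space $\mathcal{H}_1$ equals $\frac{7}{32}$, and it is attained at $$\underline{\bm{\chi}}=\frac{\sqrt5}{4}\left(\psi_{-1}+\psi_1\right)+\sqrt{\tfrac38}\,\psi_0 .$$
   Context: (Fuzzy circle $S^1_\Lambda$ with $\Lambda=1$.) $\mathcal{H}_1$ has orthonormal basis $\psi_{-1},\psi_0,\psi_1$. Operators: $x_+\psi_n=b_{n+1}\psi_{n+1}$, $x_-\psi_n=b_n\psi_{n-1}$ where $b_n=\sqrt{1+n(n-1)/k}$ for $n\in\{0,1\}$ and $b_n=0$ otherwise (so $b_0=b_1=1$, $b_{-1}=b_2=0$); $x_1=(x_++x_-)/2$, $x_2=(x_+-x_-)/(2i)$, $\bm{x}^2=x_1^2+x_2^2$. For a unit vector $\bm{\chi}$, $\langle A\rangle=\langle\bm{\chi},A\bm{\chi}\rangle$ and $(\Delta\bm{x})^2=\langle\bm{x}^2\rangle-\langle x_1\rangle^2-\langle x_2\rangle^2$. *)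

From HB Require Import structures.
From mathcomp Require Import all_boot all_order all_algebra.
From mathcomp Require Import complex.
Set Implicit Arguments. Unset Strict Implicit. Unset Printing Implicit Defensive.
Import Order.TTheory GRing.Theory Num.Theory.
Local Open Scope complex_scope.
Local Open Scope ring_scope.

Section FuzzyCircle.
Variable R : rcfType.
Local Notation C := R[i].

(* H_1 = C^3 with orthonormal basis psi_{-1}, psi_0, psi_1; index i : 'I_3 *)
Definition idx (i : 'I_3) : int := (i%:Z - 1)%R.

Definition bcoef (k : R) (n : int) : R :=
  if (n == 0) || (n == 1) then Num.sqrt (1 + (n%:~R * (n%:~R - 1)) / k) else 0.

Definition xplus (k : R) : 'M[C]_3 :=
  \matrix_(m < 3, j < 3)
    (if idx m == idx j + 1 then (bcoef k (idx j + 1))%:C else 0).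

Definition xminus (k : R) : 'M[C]_3 :=
  \matrix_(m < 3, j < 3)
    (if idx m == idx j - 1 then (bcoef k (idx j))%:C else 0).

Definition x1 (k : R) : 'M[C]_3 := (2%:R)^-1 *: (xplus k + xminus k).
Definition x2 (k : R) : 'M[C]_3 := (2%:R * 'i)^-1 *: (xplus k - xminus k).
Definition xsq (k : R) : 'M[C]_3 := x1 k *m x1 k + x2 k *m x2 k.

Definition expect (A : 'M[C]_3) (chi : 'cV[C]_3) : C :=
  \sum_(i < 3) \sum_(j < 3) conjc (chi i 0) * A i j * chi j 0.

Definition unit_vec (chi : 'cV[C]_3) : Prop :=
  \sum_(i < 3) conjc (chi i 0) * chi i 0 = 1.

Definition uncert (k : R) (chi : 'cV[C]_3) : C :=
  expect (xsq k) chi - (expect (x1 k) chi) ^+ 2 - (expect (x2 k) chi) ^+ 2.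

Definition chi_min : 'cV[C]_3 :=
  \col_(i < 3)
    (if idx i == 0 then (Num.sqrt (3%:R / 8%:R))%:C
     else (Num.sqrt 5%:R / 4%:R)%:C).

End FuzzyCircle.

(* For Lambda = 1 only b_0 = b_1 = 1 occur, so x_+ is the shift S : psi_n |-> psi_(n+1).
   Then x^2 = (S S^T + S^T S) / 2 and <x_1>^2 + <x_2>^2 = |<S>|^2, whence, writing
   chi = (a, b, c) in the basis psi_(-1), psi_0, psi_1,
     (Delta x)^2 = (|a|^2 + 2|b|^2 + |c|^2) / 2 - |b^* a + c^* b|^2.
   By the parallelogram law the subtracted term is at most 2|b|^2 (|a|^2 + |c|^2), so with
   t = |b|^2 and |a|^2 + |b|^2 + |c|^2 = 1 we get
     (Delta x)^2 >= (1 + t)/2 - 2 t (1 - t) = 7/32 + 2 (t - 3/8)^2,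
   and both inequalities are equalities for a = c = sqrt 5 / 4, b = sqrt (3/8). *)

From HB Require Import structures.
From mathcomp Require Import all_boot all_order all_algebra.
From mathcomp Require Import complex ring.
Import Order.TTheory GRing.Theory Num.Theory.
Local Open Scope complex_scope.
Local Open Scope ring_scope.

Lemma big_ord3 {V : nmodType} (F : 'I_3 -> V) :
  \sum_(i < 3) F i = F 0 + F 1 + F 2.
Proof.
by rewrite !big_ord_recl big_ord0 addr0 addrA; congr (F _ + F _ + F _); apply: val_inj.
Qed.

Lemma normCD_sqr_le {C : numClosedFieldType} (u v : C) :
  `|u + v| ^+ 2 <= 2 * (`|u| ^+ 2 + `|v| ^+ 2).
Proof.
have parallelogram : `|u + v| ^+ 2 + `|u - v| ^+ 2 = 2 * (`|u| ^+ 2 + `|v| ^+ 2).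
  by rewrite !normCK rmorphD rmorphB; ring.
by rewrite -parallelogram lerDl exprn_ge0.
Qed.

Lemma real_quadratic_ge {F : numFieldType} [t : F] : t \is Num.real ->
  7 / 32 <= (1 + t) / 2 - 2 * t * (1 - t).
Proof.
move=> treal.
have -> : (1 + t) / 2 - 2 * t * (1 - t) = 7 / 32 + 2 * (t - 3 / 8) ^+ 2 by field.
by rewrite lerDl mulr_ge0 ?ler0n ?real_exprn_even_ge0 ?rpredB ?rpred_div ?rpred_nat.
Qed.

Section FuzzyCircleLambda1.
Variable R : rcfType.
Local Notation C := R[i].

Definition shift : 'M[C]_3 := \matrix_(i, j) ((i : nat) == j.+1)%:R.

Lemma bcoefE (k : R) (n : int) : bcoef k n = ((n == 0) || (n == 1))%:R.
Proof.
rewrite /bcoef; case: ifP => // /orP[]/eqP->.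
  by rewrite mul0r mul0r addr0 sqrtr1.
by rewrite subrr mulr0 mul0r addr0 sqrtr1.
Qed.

Lemma xplusE (k : R) : xplus k = shift.
Proof.
apply/matrixP => i j; rewrite !mxE bcoefE.
by case: i => [[|[|[|?]]] ?]; case: j => [[|[|[|?]]] ?].
Qed.

Lemma xminusE (k : R) : xminus k = shift^T.
Proof.
apply/matrixP => i j; rewrite !mxE bcoefE.
by case: i => [[|[|[|?]]] ?]; case: j => [[|[|[|?]]] ?].
Qed.

Lemma expectD (A B : 'M[C]_3) (chi : 'cV[C]_3) :
  expect (A + B) chi = expect A chi + expect B chi.
Proof.
rewrite /expect -big_split; apply: eq_bigr => i _.
by rewrite -big_split; apply: eq_bigr => j _; rewrite mxE mulrDr mulrDl.
Qed.

Lemma expectN (A : 'M[C]_3) (chi : 'cV[C]_3) : expect (- A) chi = - expect A chi.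
Proof.
rewrite /expect -sumrN; apply: eq_bigr => i _.
by rewrite -sumrN; apply: eq_bigr => j _; rewrite mxE mulrN mulNr.
Qed.

Lemma expectZ (s : C) (A : 'M[C]_3) (chi : 'cV[C]_3) :
  expect (s *: A) chi = s * expect A chi.
Proof.
rewrite /expect mulr_sumr; apply: eq_bigr => i _.
by rewrite mulr_sumr; apply: eq_bigr => j _; rewrite mxE mulrCA !mulrA.
Qed.

Section Expectations.
Variable chi : 'cV[C]_3.
Local Notation a := (chi 0 0).
Local Notation b := (chi 1 0).
Local Notation c := (chi 2 0).

Lemma expect_shift : expect shift chi = b^* * a + c^* * b.
Proof. by rewrite /expect !big_ord3 !mxE /=; ring. Qed.

Lemma expect_shiftT : expect shift^T chi = (expect shift chi)^*.
Proof. by rewrite expect_shift /expect !big_ord3 !mxE /= rmorphD !rmorphM /= !conjCK; ring. Qed.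

Lemma expect_shift_shiftT : expect (shift *m shift^T) chi = `|b| ^+ 2 + `|c| ^+ 2.
Proof. by rewrite /expect !big_ord3 !mxE !big_ord3 !mxE /= !normCKC; ring. Qed.

Lemma expect_shiftT_shift : expect (shift^T *m shift) chi = `|a| ^+ 2 + `|b| ^+ 2.
Proof. by rewrite /expect !big_ord3 !mxE !big_ord3 !mxE /= !normCKC; ring. Qed.

Lemma sqr_inv2i : (2 * 'i)^-1 ^+ 2 = - 4^-1 :> C.
Proof. by rewrite exprVn exprMn sqrCi mulrN1 invrN -natrX. Qed.

Lemma uncertE (k : R) :
  uncert k chi = (`|a| ^+ 2 + 2 * `|b| ^+ 2 + `|c| ^+ 2) / 2 - `|expect shift chi| ^+ 2.
Proof.
rewrite /uncert /xsq /x1 /x2 xplusE xminusE -!scalemxAl -!scalemxAr !scalerA -!expr2.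
rewrite !(mulmxDl, mulmxDr, mulmxN, mulNmx) !(expectD, expectN, expectZ) !exprMn.
rewrite sqr_inv2i expect_shiftT expect_shift_shiftT expect_shiftT_shift [`|expect _ _| ^+ 2]normCK.
by field.
Qed.

Lemma unit_vecE : unit_vec chi <-> `|a| ^+ 2 + `|b| ^+ 2 + `|c| ^+ 2 = 1.
Proof. by rewrite /unit_vec big_ord3 !normCKC. Qed.

Lemma sqr_norm_expect_shift_le :
  `|expect shift chi| ^+ 2 <= 2 * `|b| ^+ 2 * (`|a| ^+ 2 + `|c| ^+ 2).
Proof.
have -> : 2 * `|b| ^+ 2 * (`|a| ^+ 2 + `|c| ^+ 2) = 2 * (`|b^* * a| ^+ 2 + `|c^* * b| ^+ 2).
  by rewrite !normrM !norm_conjC; ring.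
by rewrite expect_shift normCD_sqr_le.
Qed.

Lemma uncert_ge (k : R) : unit_vec chi -> 7 / 32 <= uncert k chi.
Proof.
move=> /unit_vecE norm1; rewrite uncertE.
set t := `|b| ^+ 2 in norm1 *.
have t_real : t \is Num.real by rewrite rpredX ?normr_real.
have -> : `|a| ^+ 2 + 2 * t + `|c| ^+ 2 = 1 + t by rewrite -[in RHS]norm1; ring.
apply: le_trans (real_quadratic_ge t_real) _.
rewrite lerD2l lerN2.
have -> : 1 - t = `|a| ^+ 2 + `|c| ^+ 2 by rewrite -[in LHS]norm1; ring.
exact: sqr_norm_expect_shift_le.
Qed.

End Expectations.

Lemma realC_real (x : R) : x%:C \is Num.real.
Proof. by apply/complex_realP; exists x. Qed.

Lemma realC_natdiv (m n : nat) : ((m%:R / n%:R : R)%:C : C) = m%:R / n%:R.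
Proof. by rewrite fmorph_div !rmorph_nat. Qed.

Lemma sqr_norm_chi_min :
  [/\ `|chi_min R 0 0| ^+ 2 = 5 / 16, `|chi_min R 1 0| ^+ 2 = 3 / 8
    & `|chi_min R 2 0| ^+ 2 = 5 / 16].
Proof.
have sqr_normC (x : R) : `|x%:C| ^+ 2 = (x ^+ 2)%:C by rewrite real_normK ?realC_real ?rmorphXn.
have alpha2 : (Num.sqrt 5 / 4 : R) ^+ 2 = 5 / 16.
  by rewrite expr_div_n sqr_sqrtr ?ler0n // -natrX.
have beta2 : (Num.sqrt (3 / 8) : R) ^+ 2 = 3 / 8 by rewrite sqr_sqrtr // divr_ge0 ?ler0n.
by rewrite !mxE /= !sqr_normC alpha2 beta2 !realC_natdiv.
Qed.

Lemma unit_vec_chi_min : unit_vec (chi_min R).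
Proof. by have [a2 b2 c2] := sqr_norm_chi_min; rewrite unit_vecE a2 b2 c2; field. Qed.

Lemma uncert_chi_min (k : R) : uncert k (chi_min R) = 7 / 32.
Proof.
have [a2 b2 _] := sqr_norm_chi_min.
have c_eq_a : chi_min R 2 0 = chi_min R 0 0 by rewrite !mxE.
have real_entry i : chi_min R i 0 \is Num.real by rewrite mxE; case: ifP => _; apply: realC_real.
rewrite uncertE expect_shift c_eq_a !conj_Creal ?real_entry //.
rewrite [_ * chi_min R 1 0]mulrC -mulr2n normrMn normrM exprMn_n exprMn a2 b2.
by field.
Qed.

End FuzzyCircleLambda1.

Theorem mainTheorem6 (R : rcfType) (k : R) (hk : 0 < k) :
  unit_vec (chi_min R) /\
  uncert k (chi_min R) = (7%:R / 32%:R)%:C /\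
  (forall chi : 'cV[R[i]]_3, unit_vec chi -> (7%:R / 32%:R)%:C <= uncert k chi).
Proof.
rewrite realC_natdiv; split; last split.
- exact: unit_vec_chi_min.
- exact: uncert_chi_min.
- by move=> chi; apply: uncert_ge.
Qed.
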